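(* Let $(\mathcal{R},\otimes,I,\partial)$ be a differential 2-rig whose underlying monoidal category is closed, with internal hom $[-,-]$ (so that $-\otimes A \dashv [A,-]$ for every object $A$), and which is right scopic, i.e. the derivative functor $\partial:\mathcal{R}\to\mathcal{R}$ has a right adjoint $R$. Then there is a canonical isomorphism \[ \varsigma_{AB} : [A,RB] \xrightarrow{\ \cong\ } [\partial A,B]\times R[A,B] \] natural in both objects $A,B\in\mathcal{R}$ (in particular, this binary product exists in $\mathcal{R}$).
   Context: A (cocomplete) 2-rig is a monoidal category $(\mathcal{R},\otimes,I)$ admitting all small colimits such that each functor $A\otimes -$ and $-\otimes B$ preserves them. A differential 2-rig is such an $\mathcal{R}$ together with an endofunctor $\partial:\mathcal{R}\to\mathcal{R}$ which is (i) ''linear'': it preserves colimits (in particular coproducts, written $+$); and (ii) ''Leibniz'': it is equipped with natural transformations (tensorial strengths) $\tau':\partial A\otimes B\to\partial(A\otimes B)$ and $\tau'':A\otimes\partial B\to\partial(A\otimes B)$ such that the induced map $\partial A\otimes B + A\otimes\partial B\to\partial(A\otimes B)$ is invertible. A differential 2-rig is called right scopic if $\partial$ has a right adjoint. *)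

Record Category := {
  ob :> Type;
  hom : ob -> ob -> Type;
  idm : forall a, hom a a;
  comp : forall a b c, hom b c -> hom a b -> hom a c;
  comp_idl : forall a b (f : hom a b), comp _ _ _ (idm b) f = f;
  comp_idr : forall a b (f : hom a b), comp _ _ _ f (idm a) = f;
  comp_assoc : forall a b x d (f : hom a b) (g : hom b x) (h : hom x d),
    comp _ _ _ h (comp _ _ _ g f) = comp _ _ _ (comp _ _ _ h g) f }.
Arguments hom {_} _ _.
Arguments idm {_} _.
Arguments comp {_ _ _ _} _ _.

Declare Scope cat_scope.
Notation "g ∘ f" := (comp g f) (at level 40, left associativity) : cat_scope.
Open Scope cat_scope.

Definition is_iso {C : Category} {a b : C} (f : hom a b) : Prop :=
  exists g : hom b a, g ∘ f = idm a /\ f ∘ g = idm b.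

Record Functor (C D : Category) := {
  fobj :> C -> D;
  fmap : forall a b, hom a b -> hom (fobj a) (fobj b);
  fmap_id : forall a, fmap _ _ (idm a) = idm (fobj a);
  fmap_comp : forall a b c (f : hom a b) (g : hom b c),
    fmap _ _ (g ∘ f) = fmap _ _ g ∘ fmap _ _ f }.
Arguments fobj {C D} _ _.
Arguments fmap {_ _} _ {_ _} _.

(* "small" = objects and hom-sets live in Set *)
Record SmallCategory := {
  sob :> Set;
  shom : sob -> sob -> Set;
  sidm : forall a, shom a a;
  scomp : forall a b c, shom b c -> shom a b -> shom a c;
  scomp_idl : forall a b (f : shom a b), scomp _ _ _ (sidm b) f = f;
  scomp_idr : forall a b (f : shom a b), scomp _ _ _ f (sidm a) = f;
  scomp_assoc : forall a b c d (f : shom a b) (g : shom b c) (h : shom c d),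
    scomp _ _ _ h (scomp _ _ _ g f) = scomp _ _ _ (scomp _ _ _ h g) f }.
Arguments shom {_} _ _.
Arguments sidm {_} _.
Arguments scomp {_ _ _ _} _ _.

Record Diagram (J : SmallCategory) (C : Category) := {
  dobj :> J -> C;
  dmap : forall i j, shom i j -> hom (dobj i) (dobj j);
  dmap_id : forall i, dmap _ _ (sidm i) = idm (dobj i);
  dmap_comp : forall i j k (u : shom i j) (v : shom j k),
    dmap _ _ (scomp v u) = dmap _ _ v ∘ dmap _ _ u }.
Arguments dobj {J C} _ _.
Arguments dmap {_ _} _ {_ _} _.

Definition diagram_map {J : SmallCategory} {C D : Category}
  (F : Functor C D) (X : Diagram J C) : Diagram J D.
Proof.
  refine {| dobj := fun i => F (X i);
            dmap := fun i j u => fmap F (dmap X u) |}.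
  - intros i. rewrite dmap_id. apply fmap_id.
  - intros i j k u v. rewrite dmap_comp. apply fmap_comp.
Defined.

Definition is_cocone {J : SmallCategory} {C : Category} (D : Diagram J C)
  (X : C) (c : forall i, hom (D i) X) : Prop :=
  forall i j (u : shom i j), c j ∘ dmap D u = c i.

Definition is_colimit {J : SmallCategory} {C : Category} (D : Diagram J C)
  (X : C) (c : forall i, hom (D i) X) : Prop :=
  is_cocone D X c /\
  forall (Y : C) (d : forall i, hom (D i) Y), is_cocone D Y d ->
    exists! h : hom X Y, forall i, h ∘ c i = d i.

Definition cocomplete (C : Category) : Prop :=
  forall (J : SmallCategory) (D : Diagram J C),
    exists (X : C) (c : forall i, hom (D i) X), is_colimit D X c.

Definition preserves_colimits {C C' : Category} (F : Functor C C') : Prop :=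
  forall (J : SmallCategory) (D : Diagram J C) (X : C) (c : forall i, hom (D i) X),
    is_colimit D X c ->
    is_colimit (diagram_map F D) (F X) (fun i => fmap F (c i)).

Definition is_coproduct {C : Category} {A B P : C}
  (i1 : hom A P) (i2 : hom B P) : Prop :=
  forall (X : C) (f : hom A X) (g : hom B X),
    exists! h : hom P X, h ∘ i1 = f /\ h ∘ i2 = g.

Definition is_product {C : Category} {A B P : C}
  (p1 : hom P A) (p2 : hom P B) : Prop :=
  forall (X : C) (f : hom X A) (g : hom X B),
    exists! h : hom X P, p1 ∘ h = f /\ p2 ∘ h = g.

Record Adjunction {C D : Category} (F : Functor C D) (G : Functor D C) := {
  adj_unit : forall X : C, hom X (G (F X));
  adj_counit : forall Y : D, hom (F (G Y)) Y;
  adj_unit_nat : forall X X' (f : hom X X'),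
    adj_unit X' ∘ f = fmap G (fmap F f) ∘ adj_unit X;
  adj_counit_nat : forall Y Y' (g : hom Y Y'),
    g ∘ adj_counit Y = adj_counit Y' ∘ fmap F (fmap G g);
  adj_triangle1 : forall X : C,
    adj_counit (F X) ∘ fmap F (adj_unit X) = idm (F X);
  adj_triangle2 : forall Y : D,
    fmap G (adj_counit Y) ∘ adj_unit (G Y) = idm (G Y) }.

Record Monoidal (C : Category) := {
  tens : C -> C -> C;
  tens_hom : forall a a' b b', hom a a' -> hom b b' -> hom (tens a b) (tens a' b');
  tens_id : forall a b, tens_hom _ _ _ _ (idm a) (idm b) = idm (tens a b);
  tens_comp : forall a a' a'' b b' b'' (f : hom a a') (f' : hom a' a'')
      (g : hom b b') (g' : hom b' b''),
    tens_hom _ _ _ _ (f' ∘ f) (g' ∘ g) = tens_hom _ _ _ _ f' g' ∘ tens_hom _ _ _ _ f g;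
  munit : C;
  assoc : forall a b c, hom (tens (tens a b) c) (tens a (tens b c));
  assoc_iso : forall a b c, is_iso (assoc a b c);
  assoc_nat : forall a a' b b' c c' (f : hom a a') (g : hom b b') (h : hom c c'),
    assoc a' b' c' ∘ tens_hom _ _ _ _ (tens_hom _ _ _ _ f g) h
    = tens_hom _ _ _ _ f (tens_hom _ _ _ _ g h) ∘ assoc a b c;
  lunit : forall a, hom (tens munit a) a;
  lunit_iso : forall a, is_iso (lunit a);
  lunit_nat : forall a a' (f : hom a a'),
    lunit a' ∘ tens_hom _ _ _ _ (idm munit) f = f ∘ lunit a;
  runit : forall a, hom (tens a munit) a;
  runit_iso : forall a, is_iso (runit a);
  runit_nat : forall a a' (f : hom a a'),
    runit a' ∘ tens_hom _ _ _ _ f (idm munit) = f ∘ runit a;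
  pentagon : forall a b c d,
    assoc a b (tens c d) ∘ assoc (tens a b) c d
    = tens_hom _ _ _ _ (idm a) (assoc b c d) ∘ assoc a (tens b c) d
      ∘ tens_hom _ _ _ _ (assoc a b c) (idm d);
  triangle : forall a b,
    tens_hom _ _ _ _ (idm a) (lunit b) ∘ assoc a munit b
    = tens_hom _ _ _ _ (runit a) (idm b) }.
Arguments tens {_} _ _ _.
Arguments tens_hom {_} _ {_ _ _ _} _ _.
Arguments munit {_} _.
Arguments assoc {_} _ _ _ _.
Arguments lunit {_} _ _.
Arguments runit {_} _ _.

Definition tensL {C : Category} (M : Monoidal C) (A : C) : Functor C C.
Proof.
  refine {| fobj := fun X => tens M A X;
            fmap := fun X Y f => tens_hom M (idm A) f |}.
  - intros X. apply tens_id.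
  - intros X Y Z f g. rewrite <- tens_comp, comp_idl. reflexivity.
Defined.

Definition tensR {C : Category} (M : Monoidal C) (B : C) : Functor C C.
Proof.
  refine {| fobj := fun X => tens M X B;
            fmap := fun X Y f => tens_hom M f (idm B) |}.
  - intros X. apply tens_id.
  - intros X Y Z f g. rewrite <- tens_comp, comp_idl. reflexivity.
Defined.

Record TwoRig := {
  rig_cat :> Category;
  rig_mon : Monoidal rig_cat;
  rig_cocomplete : cocomplete rig_cat;
  rig_tensL_cocont : forall A : rig_cat, preserves_colimits (tensL rig_mon A);
  rig_tensR_cocont : forall B : rig_cat, preserves_colimits (tensR rig_mon B) }.

Record Differential (R : TwoRig) := {
  deriv : Functor R R;
  deriv_cocont : preserves_colimits deriv;
  tau1 : forall A B : R, hom (tens (rig_mon R) (deriv A) B) (deriv (tens (rig_mon R) A B));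
  tau1_nat : forall A A' B B' (f : hom A A') (g : hom B B'),
    tau1 A' B' ∘ tens_hom (rig_mon R) (fmap deriv f) g
    = fmap deriv (tens_hom (rig_mon R) f g) ∘ tau1 A B;
  tau1_unit : forall A,
    fmap deriv (runit (rig_mon R) A) ∘ tau1 A (munit (rig_mon R))
    = runit (rig_mon R) (deriv A);
  tau1_assoc : forall A B C,
    tau1 A (tens (rig_mon R) B C) ∘ assoc (rig_mon R) (deriv A) B C
    = fmap deriv (assoc (rig_mon R) A B C) ∘ tau1 (tens (rig_mon R) A B) C
      ∘ tens_hom (rig_mon R) (tau1 A B) (idm C);
  tau2 : forall A B : R, hom (tens (rig_mon R) A (deriv B)) (deriv (tens (rig_mon R) A B));
  tau2_nat : forall A A' B B' (f : hom A A') (g : hom B B'),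
    tau2 A' B' ∘ tens_hom (rig_mon R) f (fmap deriv g)
    = fmap deriv (tens_hom (rig_mon R) f g) ∘ tau2 A B;
  tau2_unit : forall B,
    fmap deriv (lunit (rig_mon R) B) ∘ tau2 (munit (rig_mon R)) B
    = lunit (rig_mon R) (deriv B);
  tau2_assoc : forall A B C,
    fmap deriv (assoc (rig_mon R) A B C) ∘ tau2 (tens (rig_mon R) A B) C
    = tau2 A (tens (rig_mon R) B C) ∘ tens_hom (rig_mon R) (idm A) (tau2 B C)
      ∘ assoc (rig_mon R) A B (deriv C);
  (* Leibniz: the induced map ∂A ⊗ B + A ⊗ ∂B -> ∂(A ⊗ B) is invertible,
     for any coproduct of ∂A ⊗ B and A ⊗ ∂B *)
  leibniz : forall (A B P : R)
      (i1 : hom (tens (rig_mon R) (deriv A) B) P)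
      (i2 : hom (tens (rig_mon R) A (deriv B)) P),
    is_coproduct i1 i2 ->
    forall h : hom P (deriv (tens (rig_mon R) A B)),
      h ∘ i1 = tau1 A B -> h ∘ i2 = tau2 A B -> is_iso h }.
Arguments deriv {_} _.

Record Closed {C : Category} (M : Monoidal C) := {
  ihom : C -> C -> C;
  ev : forall A B, hom (tens M (ihom A B) A) B;
  curry : forall A B X, hom (tens M X A) B -> hom X (ihom A B);
  curry_ev : forall A B X (f : hom (tens M X A) B),
    ev A B ∘ tens_hom M (curry A B X f) (idm A) = f;
  curry_uniq : forall A B X (g : hom X (ihom A B)),
    curry A B X (ev A B ∘ tens_hom M g (idm A)) = g }.
Arguments ihom {_ _} _ _ _.
Arguments ev {_ _} _ _ _.
Arguments curry {_ _} _ {_ _ _} _.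

Definition ihom_map {C : Category} {M : Monoidal C} (K : Closed M)
  {A A' B B' : C} (f : hom A' A) (g : hom B B') :
  hom (ihom K A B) (ihom K A' B') :=
  curry K (g ∘ ev K A B ∘ tens_hom M (idm (ihom K A B)) f).


(* For every object Y, maps Y → [A, RB] correspond to maps Y ⊗ A → RB, hence
   (∂ ⊣ R) to maps ∂(Y ⊗ A) → B.  By the Leibniz rule, τ' and τ'' exhibit
   ∂(Y ⊗ A) as a coproduct ∂Y ⊗ A + Y ⊗ ∂A, so these are pairs of maps
   ∂Y ⊗ A → B and Y ⊗ ∂A → B, i.e. pairs of maps Y → R[A, B] and Y → [∂A, B].
   Thus [A, RB] is itself a product of [∂A, B] and R[A, B], with projections
   ς₁, ς₂ obtained by transposing the identity of [A, RB]; ς is the identity,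
   and its naturality is that of τ', τ'' and of the two adjunctions. *)

Section MonoidalLemmas.
Context {C : Category} (M : Monoidal C).

Lemma tens_hom_interchange (a a' b b' : C) (f : hom a a') (g : hom b b') :
  tens_hom M f (idm b') ∘ tens_hom M (idm a) g
  = tens_hom M (idm a') g ∘ tens_hom M f (idm b).
Proof. rewrite <- !tens_comp, !comp_idl, !comp_idr. reflexivity. Qed.

Lemma tens_hom_compl (a a' a'' b : C) (f : hom a a') (f' : hom a' a'') :
  tens_hom M (f' ∘ f) (idm b) = tens_hom M f' (idm b) ∘ tens_hom M f (idm b).
Proof. rewrite <- tens_comp, comp_idl. reflexivity. Qed.

End MonoidalLemmas.

Section ClosedLemmas.
Context {C : Category} {M : Monoidal C} (K : Closed M).

Definition uncurry {A B X : C} (g : hom X (ihom K A B)) : hom (tens M X A) B :=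
  ev K A B ∘ tens_hom M g (idm A).

Lemma uncurry_curry (A B X : C) (f : hom (tens M X A) B) : uncurry (curry K f) = f.
Proof. apply curry_ev. Qed.

Lemma curry_uncurry (A B X : C) (g : hom X (ihom K A B)) : curry K (uncurry g) = g.
Proof. apply curry_uniq. Qed.

Lemma uncurry_comp (A B X Y : C) (g : hom X (ihom K A B)) (h : hom Y X) :
  uncurry (g ∘ h) = uncurry g ∘ tens_hom M h (idm A).
Proof. unfold uncurry. rewrite tens_hom_compl, comp_assoc. reflexivity. Qed.

Lemma curry_comp (A B X Y : C) (f : hom (tens M X A) B) (h : hom Y X) :
  curry K f ∘ h = curry K (f ∘ tens_hom M h (idm A)).
Proof.
  rewrite <- (curry_uncurry _ _ _ (curry K f ∘ h)), uncurry_comp, uncurry_curry.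
  reflexivity.
Qed.

Lemma uncurry_idm (A B : C) : uncurry (idm (ihom K A B)) = ev K A B.
Proof. unfold uncurry. rewrite tens_id, comp_idr. reflexivity. Qed.

Lemma ihom_map_comp (A A' B B' X : C) (f : hom A' A) (g : hom B B')
    (h : hom X (ihom K A B)) :
  ihom_map K f g ∘ h = curry K (g ∘ uncurry h ∘ tens_hom M (idm X) f).
Proof.
  unfold ihom_map. rewrite curry_comp. f_equal. unfold uncurry.
  rewrite <- !comp_assoc, <- tens_hom_interchange. reflexivity.
Qed.

End ClosedLemmas.

Section AdjunctionLemmas.
Context {C D : Category} {F : Functor C D} {G : Functor D C} (a : Adjunction F G).

Definition left_adjunct {Y : C} {Z : D} (k : hom (F Y) Z) : hom Y (G Z) :=
  fmap G k ∘ adj_unit F G a Y.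

Definition right_adjunct {Y : C} {Z : D} (h : hom Y (G Z)) : hom (F Y) Z :=
  adj_counit F G a Z ∘ fmap F h.

Lemma left_right_adjunct (Y : C) (Z : D) (h : hom Y (G Z)) :
  left_adjunct (right_adjunct h) = h.
Proof.
  unfold left_adjunct, right_adjunct.
  rewrite fmap_comp, <- comp_assoc, <- adj_unit_nat, comp_assoc, adj_triangle2, comp_idl.
  reflexivity.
Qed.

Lemma right_left_adjunct (Y : C) (Z : D) (k : hom (F Y) Z) :
  right_adjunct (left_adjunct k) = k.
Proof.
  unfold left_adjunct, right_adjunct.
  rewrite fmap_comp, comp_assoc, <- adj_counit_nat, <- comp_assoc, adj_triangle1, comp_idr.
  reflexivity.
Qed.

Lemma left_adjunct_comp (Y Y' : C) (Z : D) (k : hom (F Y) Z) (h : hom Y' Y) :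
  left_adjunct k ∘ h = left_adjunct (k ∘ fmap F h).
Proof.
  unfold left_adjunct.
  rewrite <- comp_assoc, adj_unit_nat, comp_assoc, <- fmap_comp. reflexivity.
Qed.

Lemma left_adjunct_postcomp (Y : C) (Z Z' : D) (g : hom Z Z') (k : hom (F Y) Z) :
  fmap G g ∘ left_adjunct k = left_adjunct (g ∘ k).
Proof. unfold left_adjunct. rewrite fmap_comp, comp_assoc. reflexivity. Qed.

Lemma right_adjunct_comp (Y Y' : C) (Z : D) (h : hom Y (G Z)) (x : hom Y' Y) :
  right_adjunct (h ∘ x) = right_adjunct h ∘ fmap F x.
Proof. unfold right_adjunct. rewrite fmap_comp, comp_assoc. reflexivity. Qed.

Lemma right_adjunct_postcomp (Y : C) (Z Z' : D) (g : hom Z Z') (h : hom Y (G Z)) :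
  right_adjunct (fmap G g ∘ h) = g ∘ right_adjunct h.
Proof.
  unfold right_adjunct.
  rewrite fmap_comp, comp_assoc, <- adj_counit_nat, <- comp_assoc. reflexivity.
Qed.

End AdjunctionLemmas.

Section BinaryCoproducts.

Definition pair_hom (i j : bool) : Set :=
  match i, j with true, true | false, false => unit | _, _ => Empty_set end.

Lemma pair_hom_eq (i j : bool) (u v : pair_hom i j) : u = v.
Proof. destruct i, j, u, v; reflexivity. Qed.

Definition pair_id (i : bool) : pair_hom i i :=
  match i return pair_hom i i with true => tt | false => tt end.

Definition pair_comp (i j k : bool) (v : pair_hom j k) (u : pair_hom i j) : pair_hom i k.
Proof. destruct i, j, k; simpl in *; solve [exact tt | destruct u | destruct v]. Defined.

Definition pair_category : SmallCategory :=
  {| sob := bool; shom := pair_hom; sidm := pair_id; scomp := pair_comp;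
     scomp_idl := fun _ _ _ => pair_hom_eq _ _ _ _;
     scomp_idr := fun _ _ _ => pair_hom_eq _ _ _ _;
     scomp_assoc := fun _ _ _ _ _ _ _ => pair_hom_eq _ _ _ _ |}.

Context {C : Category}.

Definition pair_map (X1 X2 : C) (i j : bool) (u : pair_hom i j) :
  hom (if i then X1 else X2) (if j then X1 else X2).
Proof. destruct i, j; simpl in u; solve [exact (idm _) | destruct u]. Defined.

Definition pair_diagram (X1 X2 : C) : Diagram pair_category C.
Proof.
  refine {| dobj := fun i : pair_category => if i then X1 else X2;
            dmap := pair_map X1 X2 |}.
  - intros []; reflexivity.
  - intros [] [] [] u v; simpl in u, v; try destruct u; try destruct v;
      symmetry; apply comp_idl.
Defined.

Lemma cocomplete_coproduct (HC : cocomplete C) (X1 X2 : C) :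
  exists (P : C) (i1 : hom X1 P) (i2 : hom X2 P), is_coproduct i1 i2.
Proof.
  destruct (HC pair_category (pair_diagram X1 X2)) as [P [c [_ Hc]]].
  exists P, (c true), (c false). intros Y f g.
  set (d := fun i : bool =>
              match i return hom (pair_diagram X1 X2 i) Y with true => f | false => g end).
  assert (Hd : is_cocone (pair_diagram X1 X2) Y d).
  { intros [] [] u; simpl in u; try destruct u; apply comp_idr. }
  destruct (Hc Y d Hd) as [h [Hh Hh_uniq]].
  exists h. split.
  - split; [apply (Hh true) | apply (Hh false)].
  - intros h' [H1 H2]. apply Hh_uniq. intros []; assumption.
Qed.

Lemma is_coproduct_iso {A B P Q : C} (i1 : hom A P) (i2 : hom B P) (h : hom P Q) :
  is_coproduct i1 i2 -> is_iso h -> is_coproduct (h ∘ i1) (h ∘ i2).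
Proof.
  intros Hcp [h' [Hh'h Hhh']] X f g.
  destruct (Hcp X f g) as [k [[Hk1 Hk2] Hk_uniq]].
  exists (k ∘ h'). split.
  - split; rewrite <- !comp_assoc, (comp_assoc _ _ _ _ _ _ h h'), Hh'h, comp_idl;
      assumption.
  - intros k' [H1 H2].
    assert (E : k = k' ∘ h)
      by (apply Hk_uniq; split; rewrite <- comp_assoc; assumption).
    rewrite E, <- comp_assoc, Hhh', comp_idr. reflexivity.
Qed.

End BinaryCoproducts.

Lemma tau_coproduct (Rg : TwoRig) (D : Differential Rg) (A B : Rg) :
  is_coproduct (tau1 Rg D A B) (tau2 Rg D A B).
Proof.
  destruct (cocomplete_coproduct (rig_cocomplete Rg)
              (tens (rig_mon Rg) (deriv D A) B) (tens (rig_mon Rg) A (deriv D B)))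
    as [P [i1 [i2 Hcp]]].
  destruct (Hcp _ (tau1 Rg D A B) (tau2 Rg D A B)) as [h [[Hh1 Hh2] _]].
  rewrite <- Hh1, <- Hh2.
  exact (is_coproduct_iso i1 i2 h Hcp (leibniz Rg D A B P i1 i2 Hcp h Hh1 Hh2)).
Qed.

Section RightScopic.
Context (Rg : TwoRig) (D : Differential Rg) (K : Closed (rig_mon Rg))
  (Rt : Functor Rg Rg) (adj : Adjunction (deriv D) Rt).

Local Notation "X ⊗ Y" := (tens (rig_mon Rg) X Y) (at level 30).
Local Notation "f ⊗h g" := (tens_hom (rig_mon Rg) f g) (at level 30).

Definition ihom_adjunct {Y A B : Rg} (h : hom Y (ihom K A (Rt B))) :
  hom (deriv D (Y ⊗ A)) B :=
  right_adjunct adj (uncurry K h).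

Definition ihom_adjunct_inv {Y A B : Rg} (k : hom (deriv D (Y ⊗ A)) B) :
  hom Y (ihom K A (Rt B)) :=
  curry K (left_adjunct adj k).

Lemma ihom_adjunctK (Y A B : Rg) (h : hom Y (ihom K A (Rt B))) :
  ihom_adjunct_inv (ihom_adjunct h) = h.
Proof.
  unfold ihom_adjunct, ihom_adjunct_inv.
  rewrite left_right_adjunct, curry_uncurry. reflexivity.
Qed.

Lemma ihom_adjunct_invK (Y A B : Rg) (k : hom (deriv D (Y ⊗ A)) B) :
  ihom_adjunct (ihom_adjunct_inv k) = k.
Proof.
  unfold ihom_adjunct, ihom_adjunct_inv.
  rewrite uncurry_curry, right_left_adjunct. reflexivity.
Qed.

Lemma ihom_adjunct_comp (Y Y' A B : Rg) (h : hom Y (ihom K A (Rt B))) (x : hom Y' Y) :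
  ihom_adjunct (h ∘ x) = ihom_adjunct h ∘ fmap (deriv D) (x ⊗h idm A).
Proof. unfold ihom_adjunct. rewrite uncurry_comp, right_adjunct_comp. reflexivity. Qed.

Lemma ihom_adjunct_ihom_map (A A' B B' : Rg) (f : hom A' A) (g : hom B B') :
  ihom_adjunct (ihom_map K f (fmap Rt g))
  = g ∘ ihom_adjunct (idm (ihom K A (Rt B)))
      ∘ fmap (deriv D) (idm (ihom K A (Rt B)) ⊗h f).
Proof.
  unfold ihom_adjunct at 1, ihom_map.
  rewrite uncurry_curry, right_adjunct_comp, right_adjunct_postcomp, <- uncurry_idm.
  reflexivity.
Qed.

Definition varsigma1 (A B : Rg) : hom (ihom K A (Rt B)) (ihom K (deriv D A) B) :=
  curry K (ihom_adjunct (idm _) ∘ tau2 Rg D _ A).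

Definition varsigma2 (A B : Rg) : hom (ihom K A (Rt B)) (Rt (ihom K A B)) :=
  left_adjunct adj (curry K (ihom_adjunct (idm _) ∘ tau1 Rg D _ A)).

Lemma varsigma1_comp (Y A B : Rg) (h : hom Y (ihom K A (Rt B))) :
  varsigma1 A B ∘ h = curry K (ihom_adjunct h ∘ tau2 Rg D Y A).
Proof.
  pose proof (tau2_nat Rg D _ _ _ _ h (idm A)) as Htau. rewrite fmap_id in Htau.
  unfold varsigma1. rewrite curry_comp, <- comp_assoc, Htau, comp_assoc,
    <- ihom_adjunct_comp, comp_idl.
  reflexivity.
Qed.

Lemma varsigma2_comp (Y A B : Rg) (h : hom Y (ihom K A (Rt B))) :
  varsigma2 A B ∘ h = left_adjunct adj (curry K (ihom_adjunct h ∘ tau1 Rg D Y A)).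
Proof.
  pose proof (tau1_nat Rg D _ _ _ _ h (idm A)) as Htau.
  unfold varsigma2. rewrite left_adjunct_comp, curry_comp, <- comp_assoc, Htau,
    comp_assoc, <- ihom_adjunct_comp, comp_idl.
  reflexivity.
Qed.

Lemma varsigma1_natural (A A' B B' : Rg) (f : hom A' A) (g : hom B B') :
  varsigma1 A' B' ∘ ihom_map K f (fmap Rt g)
  = ihom_map K (fmap (deriv D) f) g ∘ varsigma1 A B.
Proof.
  pose proof (tau2_nat Rg D _ _ _ _ (idm (ihom K A (Rt B))) f) as Htau.
  rewrite varsigma1_comp, ihom_map_comp. unfold varsigma1.
  rewrite uncurry_curry, ihom_adjunct_ihom_map, <- !comp_assoc, Htau.
  reflexivity.
Qed.

Lemma varsigma2_natural (A A' B B' : Rg) (f : hom A' A) (g : hom B B') :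
  varsigma2 A' B' ∘ ihom_map K f (fmap Rt g)
  = fmap Rt (ihom_map K f g) ∘ varsigma2 A B.
Proof.
  pose proof (tau1_nat Rg D _ _ _ _ (idm (ihom K A (Rt B))) f) as Htau.
  rewrite fmap_id in Htau.
  rewrite varsigma2_comp. unfold varsigma2.
  rewrite left_adjunct_postcomp, ihom_map_comp, uncurry_curry, ihom_adjunct_ihom_map,
    <- !comp_assoc, Htau.
  reflexivity.
Qed.

Lemma varsigma_spec (Y A B : Rg) (f : hom Y (ihom K (deriv D A) B))
    (g : hom Y (Rt (ihom K A B))) (h : hom Y (ihom K A (Rt B))) :
  varsigma1 A B ∘ h = f /\ varsigma2 A B ∘ h = g <->
  ihom_adjunct h ∘ tau1 Rg D Y A = uncurry K (right_adjunct adj g) /\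
  ihom_adjunct h ∘ tau2 Rg D Y A = uncurry K f.
Proof.
  rewrite varsigma1_comp, varsigma2_comp.
  split; intros [H1 H2]; split.
  - rewrite <- H2, right_left_adjunct, uncurry_curry. reflexivity.
  - rewrite <- H1, uncurry_curry. reflexivity.
  - rewrite H2, curry_uncurry. reflexivity.
  - rewrite H1, curry_uncurry, left_right_adjunct. reflexivity.
Qed.

Lemma varsigma_is_product (A B : Rg) : is_product (varsigma1 A B) (varsigma2 A B).
Proof.
  intros Y f g.
  destruct (tau_coproduct Rg D Y A B (uncurry K (right_adjunct adj g)) (uncurry K f))
    as [k [Hk Hk_uniq]].
  exists (ihom_adjunct_inv k). split.
  - apply varsigma_spec. rewrite ihom_adjunct_invK. exact Hk.
  - intros h Hh. apply varsigma_spec in Hh.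
    rewrite (Hk_uniq _ Hh), ihom_adjunctK. reflexivity.
Qed.

End RightScopic.

Theorem proposition1p15
  (Rg : TwoRig) (D : Differential Rg) (K : Closed (rig_mon Rg))
  (Rt : Functor Rg Rg) (adj : Adjunction (deriv D) Rt) :
  exists (P : Rg -> Rg -> Rg)
         (p1 : forall A B : Rg, hom (P A B) (ihom K (deriv D A) B))
         (p2 : forall A B : Rg, hom (P A B) (Rt (ihom K A B)))
         (sigma : forall A B : Rg, hom (ihom K A (Rt B)) (P A B)),
    (forall A B : Rg, is_product (p1 A B) (p2 A B)) /\
    (forall A B : Rg, is_iso (sigma A B)) /\
    (forall (A A' B B' : Rg) (f : hom A' A) (g : hom B B'),
       p1 A' B' ∘ sigma A' B' ∘ ihom_map K f (fmap Rt g)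
       = ihom_map K (fmap (deriv D) f) g ∘ p1 A B ∘ sigma A B) /\
    (forall (A A' B B' : Rg) (f : hom A' A) (g : hom B B'),
       p2 A' B' ∘ sigma A' B' ∘ ihom_map K f (fmap Rt g)
       = fmap Rt (ihom_map K f g) ∘ p2 A B ∘ sigma A B).
Proof.
  exists (fun A B => ihom K A (Rt B)), (varsigma1 Rg D K Rt adj),
    (varsigma2 Rg D K Rt adj), (fun A B => idm (ihom K A (Rt B))).
  split; [|split; [|split]]; intros.
  - apply varsigma_is_product.
  - exists (idm _). split; apply comp_idl.
  - rewrite !comp_idr. apply varsigma1_natural.
  - rewrite !comp_idr. apply varsigma2_natural.
Qed.
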